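(* Let $x,y\in(0,\infty)$ and $n,m\in\mathbb{N}$ be such that $\frac{x}{1+y}\le1$. Then: (i) $\displaystyle\prod_{i=m}^n\Big(1-\frac{x}{i+y}\Big)\le\Big(\frac{n+1+y}{m+y}\Big)^{-x}$; (ii) $\displaystyle\sum_{i=1}^n\frac{1}{(i+y)^2}\prod_{j=i+1}^n\Big(1-\frac{x}{j+y}\Big)\le\exp\Big(\frac{x}{1+y}\Big)\cdot\begin{cases}(n+1+y)^{-1}\frac{1}{x-1}, & x\in(1,\infty),\\ (n+1+y)^{-1}\big(1+\ln(n+y)\big), & x=1,\\ (n+1+y)^{-x}\frac{(1+y)^{x-2}(x-2-y)}{x-1}, & x\in[0,1).\end{cases}$
   Context: Empty products are equal to $1$. *)

From mathcomp Require Import all_boot all_order all_algebra.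
From mathcomp Require Import all_classical all_reals all_analysis.

From mathcomp Require Import all_boot all_order all_algebra.
From mathcomp Require Import all_classical all_reals all_analysis.
From mathcomp Require Import ring lra.
Import Order.TTheory GRing.Theory Num.Theory.
Local Open Scope ring_scope.

(* Since ln (1 + 1/u) <= 1/u, each factor satisfies 1 - x/u <= (u/(u+1))^x, so the
   product telescopes, which is (i).  In (ii) this bounds the i-th summand by
   (n+1+y)^(-x) (i+y)^(x-2) times the leftover ((i+1+y)/(i+y))^x <= exp(x/(1+y)).
   The sum of (i+y)^(x-2) is then compared with the integral of t^(x-2): it telescopes
   against t^(x-1)/(x-1) (ln t when x = 1), because t^b lies above its tangents for
   b <= 0 or b >= 1 and below them for 0 < b < 1 (Bernoulli's inequality). *)

Section PowerInequalities.
Context {R : realType}.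
Implicit Types (r u v a b : R).

Lemma ln_le_subr1 r : 0 < r -> ln r <= r - 1.
Proof. by move=> r0; have := expR_ge1Dx (ln r); rewrite lnK ?posrE //; lra. Qed.

(* Young's inequality for the conjugate exponents 1/b and 1/(1-b). *)
Lemma powR_le_Bernoulli r b : 0 < r -> 0 < b < 1 -> r `^ b <= 1 + b * (r - 1).
Proof.
move=> r0 /andP[b0 b1].
have := @conjugate_powR R (r `^ b) 1 b^-1 (1 - b)^-1 (powR_ge0 _ _) ler01.
rewrite !invr_gt0 b0 subr_gt0 b1 !invrK -powRrM divff ?gt_eqF //.
have -> : (1 : R) `^ (1 - b)^-1 = 1 by rewrite powR1.
rewrite powRr1 ?(ltW r0) // => /(_ isT isT); rewrite addrC subrK => /(_ erefl).
lra.
Qed.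

Lemma powR_ge_Bernoulli r b : 0 < r -> (b <= 0) || (1 <= b) ->
  1 + b * (r - 1) <= r `^ b.
Proof.
move=> r0 hb.
have [->|b0] := eqVneq b 0; first by rewrite powRr0 mul0r addr0.
have [->|b1] := eqVneq b 1; first by rewrite powRr1 ?(ltW r0) //; lra.
have rb0 : 0 < r `^ b by rewrite powR_gt0.
(* Both cases reduce to the concave one: apply it to r^(b-1) with exponent 1/(1-b)
   when b < 0, and to r^b with exponent 1/b when b > 1. *)
case/orP: hb => hb.
- have c01 : 0 < (1 - b)^-1 < 1 by rewrite invr_gt0 invf_lt1; lra.
  have := powR_le_Bernoulli _ _ (powR_gt0 (b - 1) r0) c01.
  rewrite -powRrM.
  have -> : (b - 1) * (1 - b)^-1 = -1 by field; rewrite subr_eq0 eq_sym.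
  rewrite powR_inv1 ?(ltW r0) // powRB ?(negbTE b1) // powRr1 ?(ltW r0) // => h.
  have : (1 - b) * r * r^-1 <= (1 - b) * r * (1 + (1 - b)^-1 * (r `^ b / r - 1)).
    by rewrite ler_pM2l // mulr_gt0 // subr_gt0; lra.
  rewrite mulfK ?gt_eqF //.
  have -> : (1 - b) * r * (1 + (1 - b)^-1 * (r `^ b / r - 1)) = (1 - b) * r + r `^ b - r.
    by field; rewrite gt_eqF // ?subr_gt0; lra.
  lra.
- have c01 : 0 < b^-1 < 1 by rewrite invr_gt0 invf_lt1; lra.
  have := powR_le_Bernoulli _ _ rb0 c01.
  rewrite -powRrM divff // powRr1 ?(ltW r0) // => h.
  have : b * r <= b * (1 + b^-1 * (r `^ b - 1)) by rewrite ler_pM2l //; lra.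
  rewrite mulrDr mulrA divff // mul1r; lra.
Qed.

Let powR_div_split u v b : 0 < u -> 0 < v -> v `^ b = u `^ b * (v / u) `^ b.
Proof. by move=> u0 v0; rewrite -powRM ?divr_ge0 ?ltW // mulrC divfK ?gt_eqF. Qed.

Let powR_tangentE u v b : 0 < u ->
  u `^ b * (1 + b * (v / u - 1)) = u `^ b + b * u `^ (b - 1) * (v - u).
Proof.
move=> u0; rewrite powRB ?(gt_eqF u0) ?implybT //.
rewrite powRr1 ?(ltW u0) //.
by field; rewrite gt_eqF.
Qed.

Lemma powR_ge_tangent u v b : 0 < u -> 0 < v -> (b <= 0) || (1 <= b) ->
  u `^ b + b * u `^ (b - 1) * (v - u) <= v `^ b.
Proof.
move=> u0 v0 hb; rewrite -powR_tangentE // (powR_div_split _ _ b u0 v0).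
by rewrite ler_wpM2l ?powR_ge0 // powR_ge_Bernoulli ?divr_gt0.
Qed.

Lemma powR_le_tangent u v b : 0 < u -> 0 < v -> 0 < b < 1 ->
  v `^ b <= u `^ b + b * u `^ (b - 1) * (v - u).
Proof.
move=> u0 v0 hb; rewrite -powR_tangentE // (powR_div_split _ _ b u0 v0).
by rewrite ler_wpM2l ?powR_ge0 // powR_le_Bernoulli ?divr_gt0.
Qed.

Lemma powR_le_succ_sub u b : 0 < u -> 1 <= b ->
  u `^ (b - 1) <= (u + 1) `^ b / b - u `^ b / b.
Proof.
move=> u0 b1; have b0 : 0 < b by lra.
rewrite -mulrBl ler_pdivlMr // mulrC.
have := @powR_ge_tangent u (u + 1) b u0 (ltr_wpDr ler01 u0) (introT orP (or_intror b1)).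
by rewrite (_ : u + 1 - u = 1) ?mulr1; [lra | ring].
Qed.

Lemma powR_succ_le_sub u b : 0 < u -> b < 1 -> b != 0 ->
  (u + 1) `^ (b - 1) <= (u + 1) `^ b / b - u `^ b / b.
Proof.
move=> u0 b1 b0; have v0 : 0 < u + 1 by lra.
have du : u - (u + 1) = -1 by ring.
rewrite -mulrBl; have [bn|bp] := ltrP b 0.
- have := @powR_ge_tangent (u + 1) u b v0 u0 (introT orP (or_introl (ltW bn))).
  by rewrite ler_ndivlMr // du; lra.
- have bp' : 0 < b by rewrite lt_neqAle eq_sym b0.
  have := @powR_le_tangent (u + 1) u b v0 u0 (introT andP (conj bp' b1)).
  by rewrite ler_pdivlMr // du; lra.
Qed.

Lemma inv_succ_le_ln_sub u : 0 < u -> (u + 1)^-1 <= ln (u + 1) - ln u.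
Proof.
move=> u0; have v0 : 0 < u + 1 by lra.
have := ln_le_subr1 _ (divr_gt0 u0 v0).
rewrite ln_div ?posrE // -[u / (u + 1) - 1]opprK opprB.
have -> : 1 - u / (u + 1) = (u + 1)^-1 by field; rewrite gt_eqF.
lra.
Qed.

Lemma powRN_div u v a : 0 < u -> 0 < v -> (u / v) `^ (- a) = v `^ a / u `^ a.
Proof.
move=> u0 v0.
have e : (u / v) `^ a * v `^ a = u `^ a.
  by rewrite -powRM ?divr_ge0 ?ltW // divfK ?gt_eqF.
by rewrite powRN -[in RHS]e invfM mulrCA divff ?mulr1 // gt_eqF ?powR_gt0.
Qed.

Lemma powR_succ_le_expR u a : 0 < u -> 0 <= a ->
  (u + 1) `^ a <= u `^ a * expR (a / u).
Proof.
move=> u0 a0; have v0 : 0 < u + 1 by lra.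
rewrite /powR !gt_eqF // -expRD ler_expR -lerBlDl -mulrBr.
rewrite ler_wpM2l // -ln_div ?posrE //.
apply: le_trans (ln_le_subr1 _ (divr_gt0 v0 u0)) _.
by rewrite le_eqVlt; apply/predU1P; left; field; rewrite gt_eqF.
Qed.

Lemma one_sub_div_le_powR u a : 0 < u -> 0 <= a ->
  1 - a / u <= u `^ a / (u + 1) `^ a.
Proof.
move=> u0 a0; rewrite ler_pdivlMr ?powR_gt0 //; last by lra.
have [neg|pos] := lerP (1 - a / u) 0.
  by apply: le_trans (powR_ge0 u a); rewrite mulr_le0_ge0 ?powR_ge0.
apply: le_trans (ler_wpM2l (ltW pos) (powR_succ_le_expR _ _ u0 a0)) _.
have e_ge : 1 - a / u <= (expR (a / u))^-1 by rewrite -expRN; exact: expR_ge1Dx.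
rewrite mulrCA -[leRHS]mulr1 ler_wpM2l ?powR_ge0 //.
by rewrite -ler_pdivlMr ?expR_gt0 // div1r.
Qed.
End PowerInequalities.

Section ShiftedSums.
Context {R : realType}.
Variables (x y : R).

Let natrS_addr k : k.+1%:R + y = k%:R + y + 1.
Proof. by rewrite -natr1 addrAC. Qed.

Lemma prod_one_sub_le m n : 0 <= x -> 0 < m%:R + y -> x <= m%:R + y ->
  0 < n%:R + y ->
  \prod_(m <= i < n) (1 - x / (i%:R + y)) <= (m%:R + y) `^ x / (n%:R + y) `^ x.
Proof.
move=> x0 my0 xmy ny0.
have [nm|mn] := leqP n m.
  rewrite big_geq // ler_pdivlMr ?powR_gt0 // mul1r.
  by apply: ge0_ler_powR; rewrite // ?nnegrE ?(ltW ny0) ?(ltW my0) // lerD2r ler_nat.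
have iy0 i : (m <= i)%N -> m%:R + y <= i%:R + y by rewrite lerD2r ler_nat.
rewrite -(@telescope_prodr _ _ _ (fun k => (k%:R + y) `^ x)) //; last first.
  move=> k /andP[/ltnW mk _].
  by rewrite unitfE gt_eqF ?powR_gt0 // (lt_le_trans my0) ?iy0.
rewrite big_nat [leRHS]big_nat; apply: ler_prod => i /andP[mi _].
have u0 : 0 < i%:R + y by rewrite (lt_le_trans my0) ?iy0.
rewrite natrS_addr one_sub_div_le_powR // andbT subr_ge0 ler_pdivrMr // mul1r.
exact: le_trans xmy (iy0 _ mi).
Qed.

Lemma inv_sqr_mul_prod_le i n :
  0 <= x -> 0 < y -> x <= 1 + y -> (1 <= i <= n)%N ->
  ((i%:R + y) ^+ 2)^-1 * \prod_(i.+1 <= j < n.+1) (1 - x / (j%:R + y))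
  <= expR (x / (1 + y)) * ((n.+1%:R + y) `^ (- x) * (i%:R + y) `^ (x - 2)).
Proof.
move=> x0 y0 xy /andP[i1 iN].
have pos k : 0 < k%:R + y by rewrite ltr_wpDl.
have y1i : 1 + y <= i%:R + y by rewrite lerD2r ler1n.
have xi : x <= i.+1%:R + y by rewrite natrS_addr; lra.
have prod_le := prod_one_sub_le i.+1 n.+1 x0 (pos _) xi (pos _).
apply: le_trans (ler_wpM2l _ prod_le) _; first by rewrite invr_ge0 sqr_ge0.
rewrite natrS_addr; set u := i%:R + y; set N := n.+1%:R + y; set E := expR _.
have u0 : 0 < u := pos i.
have succ_le : (u + 1) `^ x <= u `^ x * E.
  apply: le_trans (powR_succ_le_expR _ _ u0 x0) _.
  rewrite ler_wpM2l ?powR_ge0 // ler_expR ler_wpM2l //.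
  by rewrite lef_pV2 ?posrE // addr_gt0.
rewrite powRN powRB ?(gt_eqF u0) ?implybT // (powR_mulrn 2 (ltW u0)).
have -> : E * ((N `^ x)^-1 * (u `^ x / u ^+ 2)) = (u ^+ 2)^-1 * (u `^ x * E / N `^ x).
  by rewrite /=; ring.
by rewrite ler_wpM2l ?invr_ge0 ?sqr_ge0 // ler_wpM2r ?invr_ge0 ?powR_ge0.
Qed.

Lemma sum_powR_le_gt1 n : 1 < x -> 0 < y ->
  \sum_(1 <= i < n.+1) (i%:R + y) `^ (x - 2) <= (n.+1%:R + y) `^ (x - 1) / (x - 1).
Proof.
move=> x1 y0; have b0 : 0 < x - 1 by lra.
have pos k : 0 < k%:R + y by rewrite ltr_wpDl.
pose F k := (k%:R + y) `^ (x - 1) / (x - 1).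
have F_ge0 k : 0 <= F k by rewrite divr_ge0 ?powR_ge0 ?(ltW b0).
have expE : x - 2 = x - 1 - 1 by ring.
have [x2|x2] := lerP 2 x.
- apply: (@le_trans _ _ (F n.+1 - F 1)); last by rewrite gerBl.
  rewrite -telescope_sumr //; apply: ler_sum_nat => i _.
  by rewrite /F natrS_addr expE powR_le_succ_sub //; lra.
- apply: (@le_trans _ _ (F n - F 0)).
    rewrite big_add1 -telescope_sumr //; apply: ler_sum_nat => i _.
    by rewrite /F natrS_addr expE powR_succ_le_sub ?gt_eqF //; lra.
  change (F n - F 0 <= F n.+1); have := F_ge0 0%N; suff : F n <= F n.+1 by lra.
  rewrite /F ler_pM2r ?invr_gt0 //; apply: ge0_ler_powR; first exact: ltW.
  - by rewrite nnegrE ltW.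
  - by rewrite nnegrE ltW.
  - by rewrite natrS_addr lerDl.
Qed.

Lemma sum_powR_le_lt1 n : x < 1 -> 0 < y -> (1 <= n)%N ->
  \sum_(1 <= i < n.+1) (i%:R + y) `^ (x - 2)
  <= (1 + y) `^ (x - 2) * (x - 2 - y) / (x - 1).
Proof.
move=> x1 y0 n1; have b0 : x - 1 < 0 by lra.
have pos k : 0 < k%:R + y by rewrite ltr_wpDl.
pose F k := (k%:R + y) `^ (x - 1) / (x - 1).
have expE : x - 2 = x - 1 - 1 by ring.
rewrite big_ltn // big_add1.
apply: (@le_trans _ _ ((1 + y) `^ (x - 2) + (F n - F 1))).
  rewrite lerD2l -telescope_sumr //; apply: ler_sum_nat => i _.
  by rewrite /F natrS_addr expE powR_succ_le_sub ?lt_eqF //; lra.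
have Fn_le0 : F n <= 0 by rewrite mulr_ge0_le0 ?powR_ge0 // invr_le0 ltW.
apply: (@le_trans _ _ ((1 + y) `^ (x - 2) - F 1)); first lra.
have y1 : 0 < 1 + y by lra.
have -> : F 1 = (1 + y) `^ (x - 2) * (1 + y) / (x - 1).
  rewrite /F mulr1n -[X in _ * X / _](powRr1 (ltW y1)) -powRD ?(gt_eqF y1) ?implybT //.
  by congr (_ `^ _ / _); ring.
by rewrite le_eqVlt; apply/predU1P; left; field; rewrite lt_eqF.
Qed.

Lemma sum_powRN1_le_ln n : 0 < y -> (1 <= n)%N ->
  \sum_(1 <= i < n.+1) (i%:R + y) `^ (-1) <= 1 + ln (n%:R + y).
Proof.
move=> y0 n1; have pos k : 0 < k%:R + y by rewrite ltr_wpDl.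
rewrite big_ltn // big_add1 mulr1n.
apply: (@le_trans _ _ ((1 + y)^-1 + (ln (n%:R + y) - ln (1%:R + y)))).
  rewrite powR_inv1 ?addr_ge0 ?(ltW y0) // lerD2l.
  rewrite -(@telescope_sumr _ _ _ (fun k => ln (k%:R + y))) //.
  apply: ler_sum_nat => i _.
  by have u0 := pos i; rewrite natrS_addr powR_inv1 ?inv_succ_le_ln_sub //; lra.
have y1 : 1 <= 1 + y by lra.
have := ln_ge0 y1; have : (1 + y)^-1 <= 1 by rewrite invf_le1 //; lra.
lra.
Qed.
End ShiftedSums.

Theorem lemmaA1 (R : realType) (x y : R) (n m : nat)
  (hx : 0 < x) (hy : 0 < y) (hm : (1 <= m)%N) (hn : (1 <= n)%N)
  (hxy : x / (1 + y) <= 1) :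
  (\prod_(m <= i < n.+1) (1 - x / (i%:R + y))
     <= ((n.+1%:R + y) / (m%:R + y)) `^ (- x))
  /\
  (\sum_(1 <= i < n.+1)
      ((i%:R + y) ^+ 2)^-1 * \prod_(i.+1 <= j < n.+1) (1 - x / (j%:R + y))
     <= expR (x / (1 + y)) *
        (if 1 < x then (n.+1%:R + y)^-1 * (x - 1)^-1
         else if x == 1 then (n.+1%:R + y)^-1 * (1 + ln (n%:R + y))
         else (n.+1%:R + y) `^ (- x) *
              ((1 + y) `^ (x - 2) * (x - 2 - y) / (x - 1)))).
Proof.
have pos k : 0 < k%:R + y by rewrite ltr_wpDl.
have xy1 : x <= 1 + y by rewrite -[1 + y]mul1r -ler_pdivrMr // addr_gt0.
split.
  rewrite powRN_div //; apply: prod_one_sub_le => //; first exact: ltW.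
  by apply: le_trans xy1 _; rewrite lerD2r ler1n.
apply: le_trans.
  apply: ler_sum_nat => i hi; exact: (inv_sqr_mul_prod_le x y i n (ltW hx) hy xy1 hi).
rewrite -!big_distrr /= ler_wpM2l ?expR_ge0 //.
have [x1|x1] := ltrP 1 x.
  apply: le_trans (ler_wpM2l (powR_ge0 _ _) (sum_powR_le_gt1 x y n x1 hy)) _.
  rewrite mulrA -powRD; last by rewrite (gt_eqF (pos _)) implybT.
  by rewrite (_ : - x + (x - 1) = -1) ?powR_inv1 ?(ltW (pos _)) //; ring.
have [->|xn1] := eqVneq x 1.
  rewrite (_ : 1 - 2 = -1 :> R); last by ring.
  by rewrite powR_inv1 ?ler_wpM2l ?sum_powRN1_le_ln // ?invr_ge0 ltW.
rewrite ler_wpM2l ?powR_ge0 // sum_powR_le_lt1 //.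
by rewrite lt_neqAle xn1.
Qed.
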